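(* Let $A$ be a unital associative (not necessarily commutative) $\mathbb{K}$-algebra. The right-shift operator $P_A$ on $(T(A),\bullet^\ell)$ satisfies the $TD$-relation: for all $U,V\in T(A)$, $$P_A(U)\bullet^\ell P_A(V)=P_A\bigl(U\bullet^\ell P_A(V)\bigr)+P_A\bigl(P_A(U)\bullet^\ell V\bigr)-P_A\bigl(U\bullet^\ell P_A(1_{\mathbb{K}})\bullet^\ell V\bigr).$$ Hence $(T(A),\bullet^\ell,P_A)$ is a unital $TD$-algebra.
   Context: $\mathbb{K}$ is a field of characteristic $0$, $A$ has product $[a;b]$ and unit $1_A$. $T(A)=\bigoplus_{n\ge0}A^{\otimes n}$ with $A^{\otimes0}=\mathbb{K}1_{\mathbb{K}}$; $a\otimes1_{\mathbb{K}}$ is identified with $a$. The left-shift shuffle $\bullet^\ell$ is the bilinear product on $T(A)$ with $k1_{\mathbb{K}}\bullet^\ell U=kU=U\bullet^\ell k1_{\mathbb{K}}$ and, for $a,b\in A$, $U,V\in T(A)$, $(a\otimes U)\bullet^\ell(b\otimes V)=a\otimes\bigl(U\bullet^\ell(b\otimes V)\bigr)+b\otimes\bigl((a\otimes U)\bullet^\ell V\bigr)-[a;b]\otimes1_A\otimes(U\bullet^\ell V)$; it is associative with unit $1_{\mathbb{K}}$. The right-shift map $P_A:T(A)\to T(A)$ is the linear map $P_A(U)=1_A\otimes U$ for words $U$ of positive length and $P_A(1_{\mathbb{K}})=1_A$. A $TD$-algebra is a pair $(B,P)$, $B$ a unital associative algebra, $P:B\to B$ linear with $P(x)P(y)=P\bigl(P(x)y+xP(y)\bigr)-P\bigl(x\,P(1_B)\,y\bigr)$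 for all $x,y$. *)

From HB Require Import structures.
From mathcomp Require Import all_boot all_order all_algebra.
Set Implicit Arguments. Unset Strict Implicit. Unset Printing Implicit Defensive.
Import GRing.Theory.
Local Open Scope ring_scope.

Definition lin_fun (K : pzRingType) (V W : lmodType K) (g : V -> W) : Prop :=
  forall (k : K) (x y : V), g (k *: x + y) = k *: g x + g y.

(* A family (indexed by the length n) of n-multilinear maps A^n -> W,
   presented as a single map on words. *)
Definition multilinear (K : pzRingType) (A W : lmodType K) (f : seq A -> W) : Prop :=
  forall (u v : seq A) (a b : A) (k : K),
    f (u ++ (k *: a + b) :: v) = k *: f (u ++ a :: v) + f (u ++ b :: v).

(* (T, iota) is the tensor module T(A) = (+)_{n>=0} A^{(x)n}, with
   iota [:: a1; ...; an] = a1 (x) ... (x) an and iota [::] = 1_K :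
   universal for families of multilinear maps (one for each n). *)
Definition is_tensor_module (K : pzRingType) (A T : lmodType K) (iota : seq A -> T) : Prop :=
  multilinear iota /\
  forall (W : lmodType K) (f : seq A -> W), multilinear f ->
    (exists g : T -> W, lin_fun g /\ forall w, g (iota w) = f w) /\
    (forall g1 g2 : T -> W, lin_fun g1 -> lin_fun g2 ->
       (forall w, g1 (iota w) = g2 (iota w)) -> forall x, g1 x = g2 x).

Definition is_TD_algebra (K : pzRingType) (B : lmodType K)
    (mul : B -> B -> B) (one : B) (P : B -> B) : Prop :=
  [/\ (forall x y z, mul x (mul y z) = mul (mul x y) z),
      (forall x, mul one x = x /\ mul x one = x),
      (forall x, lin_fun (mul x)) /\ (forall y, lin_fun (fun x => mul x y)),
      lin_fun P &
      (forall x y, mul (P x) (P y) =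
         P (mul (P x) y + mul x (P y)) - P (mul (mul x (P one)) y))].

(* The right shift P_A agrees with the left shift U |-> 1_A (x) U on every word, the
   empty one included, since P_A(1_K) = 1_A = 1_A (x) 1_K.  Because 1_A * a = a, the
   recursion of the shuffle shows that multiplying by 1_A (x) 1_K on either side is this
   left shift, so by associativity (1_A (x) U) * V = 1_A (x) (U * V).  The TD-relation is
   then the defining recursion of the shuffle for a = b = 1_A. *)
From HB Require Import structures.
From mathcomp Require Import all_boot all_order all_algebra.
Import GRing.Theory.
Local Open Scope ring_scope.

Lemma lin_funD {K : pzRingType} {V W : lmodType K} {g : V -> W} :
  lin_fun g -> forall x y, g (x + y) = g x + g y.
Proof. by move=> g_lin x y; rewrite -[x]scale1r g_lin !scale1r. Qed.

Lemma tensor_module_lin_ext {K : pzRingType} {A T W : lmodType K} {iota : seq A -> T} :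
  is_tensor_module iota -> forall g1 g2 : T -> W, lin_fun g1 -> lin_fun g2 ->
  (forall w, g1 (iota w) = g2 (iota w)) -> forall x, g1 x = g2 x.
Proof.
move=> [iota_ml univ] g1 g2 g1_lin g2_lin.
have g1_ml : multilinear (fun w => g1 (iota w)).
  by move=> u v a b k /=; rewrite iota_ml g1_lin.
exact: (univ W _ g1_ml).2.
Qed.

Section ShiftedShuffle.

Context {K : pzRingType} {A : algType K} {T : lmodType K} {iota : seq A -> T}.
Hypothesis T_tensor : is_tensor_module iota.

Context {left : A -> T -> T}.
Hypothesis left_lin : forall a, lin_fun (left a).
Hypothesis left_iota : forall a w, left a (iota w) = iota (a :: w).

Context {mul : T -> T -> T}.
Hypothesis mul_linr : forall U, lin_fun (mul U).
Hypothesis mul_linl : forall V, lin_fun (fun U => mul U V).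
Hypothesis mul_unitl : forall (k : K) U, mul (k *: iota [::]) U = k *: U.
Hypothesis mul_unitr : forall (k : K) U, mul U (k *: iota [::]) = k *: U.
Hypothesis mul_left : forall (a b : A) (U V : T),
  mul (left a U) (left b V) =
    left a (mul U (left b V)) + left b (mul (left a U) V)
    - left (a * b) (left 1 (mul U V)).
Hypothesis mul_assoc : forall U V W, mul U (mul V W) = mul (mul U V) W.

Let lin_ext := tensor_module_lin_ext (W := T) T_tensor.

Lemma mul_nill U : mul (iota [::]) U = U.
Proof. by rewrite -[iota [::]]scale1r mul_unitl scale1r. Qed.

Lemma mul_nilr U : mul U (iota [::]) = U.
Proof. by rewrite -[iota [::]]scale1r mul_unitr scale1r. Qed.

Lemma mul_shift1r U : mul U (left 1 (iota [::])) = left 1 U.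
Proof.
apply: (lin_ext (mul^~ (left 1 (iota [::])))) => //.
elim=> [|a w IHw]; first by rewrite mul_nill.
by rewrite -left_iota mul_left IHw !mul_nilr mulr1 addrAC subrr add0r.
Qed.

Lemma mul_shift1l U : mul (left 1 (iota [::])) U = left 1 U.
Proof.
apply: lin_ext => //.
elim=> [|a w IHw]; first by rewrite mul_nilr.
by rewrite -left_iota mul_left IHw !mul_nill mul1r addrK.
Qed.

Lemma mul_left1l U V : mul (left 1 U) V = left 1 (mul U V).
Proof. by rewrite -(mul_shift1l U) -mul_assoc mul_shift1l. Qed.

Lemma left1_TD U V :
  mul (left 1 U) (left 1 V) =
    left 1 (mul U (left 1 V)) + left 1 (mul (left 1 U) V)
    - left 1 (mul (mul U (left 1 (iota [::]))) V).
Proof. by rewrite mul_left mulr1 mul_shift1r mul_left1l. Qed.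

Context {P : T -> T}.
Hypothesis P_lin : lin_fun P.
Hypothesis P_word : forall w : seq A, w != [::] -> P (iota w) = iota (1 :: w).
Hypothesis P_one : P (iota [::]) = iota [:: 1].

Lemma right_shift_left1 x : P x = left 1 x.
Proof.
apply: lin_ext => // -[|a w]; first by rewrite P_one left_iota.
by rewrite P_word // left_iota.
Qed.

End ShiftedShuffle.

Theorem proposition4p6
  (K : fieldType) (charK0 : [pchar K] =i pred0)
  (A : algType K)
  (T : lmodType K) (iota : seq A -> T)
  (HT : is_tensor_module iota)
  (* a (x) - : T(A) -> T(A), the linear map a (x) U *)
  (left : A -> T -> T)
  (Hleft_lin : forall a, lin_fun (left a))
  (Hleft : forall a w, left a (iota w) = iota (a :: w))
  (* the left-shift shuffle product *)
  (mul : T -> T -> T)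
  (Hmul_linr : forall U, lin_fun (mul U))
  (Hmul_linl : forall V, lin_fun (fun U => mul U V))
  (Hmul_unitl : forall (k : K) U, mul (k *: iota [::]) U = k *: U)
  (Hmul_unitr : forall (k : K) U, mul U (k *: iota [::]) = k *: U)
  (Hmul_rec : forall (a b : A) (U V : T),
     mul (left a U) (left b V) =
       left a (mul U (left b V)) + left b (mul (left a U) V)
       - left (a * b) (left 1 (mul U V)))
  (Hmul_assoc : forall U V W, mul U (mul V W) = mul (mul U V) W)
  (* the right-shift map P_A *)
  (P : T -> T)
  (HP_lin : lin_fun P)
  (HP_word : forall w : seq A, w != [::] -> P (iota w) = iota (1 :: w))
  (HP_one : P (iota [::]) = iota [:: 1]) :
  (forall U V : T,
     mul (P U) (P V) =
       P (mul U (P V)) + P (mul (P U) V)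
       - P (mul (mul U (P (iota [::]))) V)) /\
  is_TD_algebra mul (iota [::]) P.
Proof.
have P_left1 := right_shift_left1 HT Hleft_lin Hleft HP_lin HP_word HP_one.
have TD U V : mul (P U) (P V) =
    P (mul U (P V)) + P (mul (P U) V) - P (mul (mul U (P (iota [::]))) V).
  rewrite !P_left1.
  exact: (left1_TD HT Hleft_lin Hleft Hmul_linr Hmul_linl Hmul_unitl Hmul_unitr
           Hmul_rec Hmul_assoc U V).
split=> //; split=> //.
- by move=> x; rewrite (mul_nill Hmul_unitl) (mul_nilr Hmul_unitr).
- by move=> x y; rewrite TD (lin_funD HP_lin) (addrC (P (mul (P x) y))).
Qed.
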